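(* Let $W$ be an $\epsilon$-spectral cluster of $G_0$, let $V\subseteq V_0$ be closed in $G_0$, let $G=G_0|V$, and let $S\subseteq V$ be closed in $G$ and dominate $W$. Suppose $v\in S$ has $d_G(v)>0$ and at least $\frac59 d_G(v)$ of its $G$-neighbors in $V\setminus S$. Then $S\setminus\{v\}$ is closed in $G$ and dominates $W$. Consequently, performing any sequence of such moves (local improvements of $V\setminus S$) preserves that $S$ is closed in $G$ and dominates $W$.
   Context: Standing setting: $G_0=(V_0,E_0)$ is a finite simple undirected graph and $0<\epsilon\le 1/2000000$. For a graph $H$, $d_H(v)$ is the degree, $\mathrm{vol}_H(S)=\sum_{v\in S}d_H(v)$, $E(S,T)$ is the set of edges with one endpoint in $S$ and the other in $T$, $\partial_H S=E(S,V(H)\setminus S)$. For $V\subseteq V_0$, $G_0|V$ is the induced subgraph. An $\epsilon$-spectral cluster of $G_0$ is $W\subseteq V_0$ with $\mathrm{vol}_{G_0}(W)>0$, $|\partial_{G_0}W|\le\epsilon\,\mathrm{vol}_{G_0}(W)$, and for every $A\subseteq W$ with $r=\mathrm{vol}_{G_0}(A)/\mathrm{vol}_{G_0}(W)$, $|E(A,W\setminus A)|\ge(r(1-r)-\epsilon)\mathrm{vol}_{G_0}(W)$. A set $A\subseteq V(H)$ is closed in $H$ if no $v\in V(H)\setminus A$ with $d_H(v)>0$ has at least $\frac59 d_H(v)$ of its $H$-neighbors in $A$. A set $A\subseteq V_0$ dominates $W$ if $\mathrm{vol}_{G_0}(W\cap A)>(1-3\epsilon)\mathrm{vol}_{G_0}(W)$.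 *)

(* Graph G0 = (T, e): T finite vertex type (V0 = all of T),
   e symmetric irreflexive relation (finite simple undirected graph). *)
From HB Require Import structures.
From mathcomp Require Import all_boot all_order all_algebra.
Set Implicit Arguments. Unset Strict Implicit. Unset Printing Implicit Defensive.
Import Order.TTheory GRing.Theory Num.Theory.

Section Graph.
Variables (T : finType) (e : rel T).

Definition deg0 (v : T) : nat := #|[set u | e v u]|.

Definition vol0 (A : {set T}) : nat := \sum_(v in A) deg0 v.

Definition edges_between (S U : {set T}) : {set {set T}} :=
  [set D : {set T} | [exists x in S, exists y in U, e x y && (D == [set x; y])]].

Definition nedges (S U : {set T}) : nat := #|edges_between S U|.

Definition degH (V : {set T}) (v : T) : nat := #|[set u in V | e v u]|.

Definition nbrsIn (V A : {set T}) (v : T) : nat := #|[set u in V | (u \in A) && e v u]|.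

Definition closed_in (V A : {set T}) : Prop :=
  forall v, v \in V -> v \notin A -> (0 < degH V v)%N ->
    ~ (5 * degH V v <= 9 * nbrsIn V A v)%N.

Variable R : realFieldType.

Definition spectral_cluster (eps : R) (W : {set T}) : Prop :=
  [/\ (0 < vol0 W)%N,
      ((nedges W (~: W))%:R <= eps * (vol0 W)%:R)%R &
      forall A : {set T}, A \subset W ->
        let r := ((vol0 A)%:R / (vol0 W)%:R)%R in
        ((r * (1 - r) - eps) * (vol0 W)%:R <= (nedges A (W :\: A))%:R)%R].

Definition dominates (eps : R) (W A : {set T}) : Prop :=
  ((1 - 3 * eps) * (vol0 W)%:R < (vol0 (W :&: A))%:R)%R.

Definition move (V S S' : {set T}) : Prop :=
  exists2 v, v \in S &
    [/\ (0 < degH V v)%N, (5 * degH V v <= 9 * nbrsIn V (V :\: S) v)%N & S' = S :\ v].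

Inductive moves (V : {set T}) : {set T} -> {set T} -> Prop :=
| moves_refl S : moves V S S
| moves_step S S' S'' : move V S S' -> moves V S' S'' -> moves V S S''.

End Graph.

(* S :\ v stays closed in G because v itself has at most 4/9 of
   its neighbours in S :\ v, and the other outside vertices only lose
   neighbours in S.  Since V is closed in G0, closedness in G lifts to G0, so
   every vertex of D := W :\: (S :\ v) has at most 5/9 of its degree towards
   W :\: D and the cut of D in W is at most 5/9 vol(D).  The spectral-cluster
   inequality then forces vol(D)/vol(W) to be either tiny or close to 4/9; but
   vol(D) = d(v) + vol(W :\: S), and d(v) is controlled by vol(W :\: S) and the
   boundary of W, so vol(D)/vol(W) is tiny and S :\ v still dominates W. *)
From HB Require Import structures.
From mathcomp Require Import all_boot all_order all_algebra.
From mathcomp Require Import zify lra.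
Import Order.TTheory GRing.Theory Num.Theory.

Set Implicit Arguments.
Unset Strict Implicit.
Unset Printing Implicit Defensive.

Section Neighbourhoods.
Variables (T : finType) (e : rel T).

Lemma nbrsIn_sub (V A : {set T}) x :
  A \subset V -> nbrsIn e V A x = #|[set y in A | e x y]|.
Proof.
move=> sAV; apply: eq_card => y; rewrite !inE.
by case yA: (y \in A); rewrite ?andbF // (subsetP sAV).
Qed.

Lemma degH_setT x : degH e [set: T] x = deg0 e x.
Proof. by apply: eq_card => y; rewrite !inE. Qed.

Lemma degH_le_deg0 (V : {set T}) x : (degH e V x <= deg0 e x)%N.
Proof. by apply: subset_leq_card; apply/subsetP => y; rewrite !inE => /andP[_ ->]. Qed.

Lemma nbrsIn_le_degH (V A : {set T}) x : (nbrsIn e V A x <= degH e V x)%N.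
Proof. by apply: subset_leq_card; apply/subsetP => y; rewrite !inE => /andP[-> /andP[_ ->]]. Qed.

Lemma nbrsIn_subset (V A B : {set T}) x :
  A \subset B -> (nbrsIn e V A x <= nbrsIn e V B x)%N.
Proof.
move=> sAB; apply: subset_leq_card; apply/subsetP => y; rewrite !inE.
by case/and3P => -> /(subsetP sAB) -> ->.
Qed.

Lemma nbrsIn_setD1_add (V S : {set T}) v :
  (nbrsIn e V (S :\ v) v + nbrsIn e V (V :\: S) v <= degH e V v)%N.
Proof.
rewrite /nbrsIn -cardsUI.
have -> : [set u in V | (u \in S :\ v) && e v u] :&: [set u in V | (u \in V :\: S) && e v u]
          = set0.
  by apply/setP => y; rewrite !inE; case: (y \in S); rewrite ?andbF.
rewrite cards0 addn0; apply: subset_leq_card; apply/subsetP => y; rewrite !inE.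
by case/orP => /andP[-> /andP[_ ->]].
Qed.

Lemma nedges_le_sum (X Y : {set T}) :
  (nedges e X Y <= \sum_(x in X) #|[set y in Y | e x y]|)%N.
Proof.
pose P : {set T * T} := [set p | [&& p.1 \in X, p.2 \in Y & e p.1 p.2]].
have sub : edges_between e X Y \subset [set [set p.1; p.2] | p in P].
  apply/subsetP => D; rewrite inE.
  case/existsP=> x /andP[xX /existsP[y /andP[yY /andP[exy /eqP ->]]]].
  by apply/imsetP; exists (x, y); rewrite // inE /= xX yY exy.
apply: leq_trans (subset_leq_card sub) _; apply: leq_trans (leq_imset_card _ _) _.
rewrite -sum1_card (eq_bigl (fun p => (p.1 \in X) && ((p.2 \in Y) && e p.1 p.2))).
  rewrite -(pair_big_dep (mem X) (fun x y => (y \in Y) && e x y) (fun _ _ => 1%N)) /=.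
  by apply/eq_leq/eq_bigr => x _; rewrite -sum1_card; apply: eq_bigl => y; rewrite inE.
by move=> p; rewrite inE.
Qed.

Lemma nedges_le_vol (a b : nat) (D Y : {set T}) :
  (forall x, x \in D -> b * #|[set y in Y | e x y]| <= a * deg0 e x)%N ->
  (b * nedges e D Y <= a * vol0 e D)%N.
Proof.
move=> hD; apply: leq_trans (leq_mul (leqnn b) (nedges_le_sum D Y)) _.
by rewrite /vol0 !big_distrr leq_sum.
Qed.

Lemma closed_in_nbrsIn (V A : {set T}) x :
  closed_in e V A -> x \in V -> x \notin A -> (9 * nbrsIn e V A x <= 5 * degH e V x)%N.
Proof.
move=> hA xV xA; have := nbrsIn_le_degH V A x.
case: (posnP (degH e V x)) => [-> | dx]; first lia.
by have := hA x xV xA dx; lia.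
Qed.

Lemma closed_in_setD1 (V S : {set T}) v :
  closed_in e V S -> v \in S -> (0 < degH e V v)%N ->
  (5 * degH e V v <= 9 * nbrsIn e V (V :\: S) v)%N ->
  closed_in e V (S :\ v).
Proof.
move=> hS vS dv hv u uV; rewrite in_setD1 negb_and negbK => /orP[/eqP-> | uS] du.
  by have := nbrsIn_setD1_add V S v; lia.
have := hS u uV uS du; have := nbrsIn_subset V u (subD1set S v); lia.
Qed.

Lemma closed_in_trans (V S : {set T}) :
  closed_in e [set: T] V -> S \subset V -> closed_in e V S -> closed_in e [set: T] S.
Proof.
move=> hV sSV hS x _ xS; rewrite degH_setT nbrsIn_sub ?subsetT // => dx.
case xV: (x \in V); last first.
  have := hV x (in_setT x) (negbT xV); rewrite degH_setT nbrsIn_sub ?subsetT // => /(_ dx).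
  by have := nbrsIn_subset [set: T] x sSV; rewrite !nbrsIn_sub ?subsetT //; lia.
have := nbrsIn_le_degH V S x; have := degH_le_deg0 V x; rewrite nbrsIn_sub //.
case: (posnP (degH e V x)) => [-> | dxV]; first lia.
by have := hS x xV xS dxV; rewrite nbrsIn_sub //; lia.
Qed.

Lemma nbrs_compl_le_nedges (W : {set T}) x :
  x \in W -> (#|[set y in ~: W | e x y]| <= nedges e W (~: W))%N.
Proof.
move=> xW; rewrite -(card_in_imset (f := fun y => [set x; y])); last first.
  move=> y z; rewrite !inE => /andP[yW _] /andP[zW _] /= eq_xy.
  have : y \in [set x; z] by rewrite -eq_xy !inE eqxx orbT.
  by rewrite !inE => /orP[/eqP yx | /eqP //]; move: yW; rewrite yx xW.
apply: subset_leq_card; apply/subsetP => D /imsetP[y]; rewrite !inE => /andP[yW exy] ->.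
by apply/existsP; exists x; rewrite xW /=; apply/existsP; exists y; rewrite inE yW exy eqxx.
Qed.

Hypotheses (e_sym : symmetric e) (e_irr : irreflexive e).

Lemma nbrs_le_vol0 (B : {set T}) x : (#|[set y in B | e x y]| <= vol0 e B)%N.
Proof.
rewrite -sum1_card /vol0 [X in (_ <= X)%N](big_setID [set y in B | e x y]) /=.
rewrite (setIidPr _); last by apply/subsetP => y; rewrite inE => /andP[].
apply: leq_trans (leq_addr _ _); apply: leq_sum => y; rewrite inE => /andP[_ exy].
by apply/card_gt0P; exists x; rewrite inE e_sym.
Qed.

Lemma deg0_le_boundary (W A : {set T}) v : v \in W ->
  (deg0 e v <= #|[set y in A :\ v | e v y]| + vol0 e (W :\: A) + nedges e W (~: W))%N.
Proof.
move=> vW.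
have := nbrs_le_vol0 (W :\: A) v; have := nbrs_compl_le_nedges vW.
set N1 := [set y in A :\ v | e v y]; set N2 := [set y in W :\: A | e v y].
set N3 := [set y in ~: W | e v y].
have sub : [set u | e v u] \subset (N1 :|: N2) :|: N3.
  apply/subsetP => y; rewrite !inE => evy; rewrite evy !andbT.
  have -> : y != v by apply: contraTneq evy => ->; rewrite e_irr.
  by case: (y \in W); case: (y \in A).
by have := subset_leq_card sub; rewrite /deg0 !cardsU; lia.
Qed.

End Neighbourhoods.

Section Dominance.
Local Open Scope ring_scope.
Variables (R : realFieldType) (T : finType) (e : rel T).

Lemma vol0_setID (W A : {set T}) : vol0 e W = (vol0 e (W :&: A) + vol0 e (W :\: A))%N.
Proof. exact: big_setID. Qed.

Lemma dominatesE (eps : R) (W A : {set T}) :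
  dominates e eps W A <-> (vol0 e (W :\: A))%:R < 3 * eps * (vol0 e W)%:R.
Proof.
by rewrite /dominates (vol0_setID W A) natrD; split => h; nra.
Qed.

Lemma small_side_of_sparse_cut (eps X b d n E : R) :
  0 < eps -> eps <= 1 / 100 -> 0 <= b -> 0 <= d ->
  b < 3 * eps * X -> n <= eps * X -> 5 * d <= 9 * (b + n) ->
  (((d + b) / X) * (1 - (d + b) / X) - eps) * X <= E -> 9 * E <= 5 * (d + b) ->
  d + b < 3 * eps * X.
Proof.
move=> eps0 eps1 b0 d0 bX nX hd hcut hE.
have X0 : 0 < X by nra.
set y := (d + b) / X in hcut.
have yX : d + b = y * X by rewrite /y mulfVK // gt_eqF.
have y_small : y < 11 * eps by rewrite -(ltr_pM2r X0); nra.
have hy : y * (1 - y) - eps <= 5 / 9 * y by rewrite -(ler_pM2r X0); nra.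
rewrite yX ltr_pM2r //; nra.
Qed.

End Dominance.

Section LocalImprovement.
Variables (R : realFieldType) (T : finType) (e : rel T).
Hypotheses (e_sym : symmetric e) (e_irr : irreflexive e).
Variables (eps : R) (W V : {set T}).
Hypotheses (eps_pos : (0 < eps)%R) (eps_small : (eps <= 1 / 100)%R).
Hypotheses (hW : spectral_cluster e eps W) (hV : closed_in e [set: T] V).

Lemma nbrs_setD1_le (S : {set T}) v : S \subset V ->
  (5 * degH e V v <= 9 * nbrsIn e V (V :\: S) v)%N ->
  (9 * #|[set y in S :\ v | e v y]| <= 4 * deg0 e v)%N.
Proof.
move=> sSV hv; rewrite -(nbrsIn_sub e v (subset_trans (subD1set S v) sSV)).
by have := nbrsIn_setD1_add e V S v; have := degH_le_deg0 e V v; lia.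
Qed.

Lemma dominates_setD1 (S : {set T}) v :
  S \subset V -> closed_in e V S -> dominates e eps W S -> v \in S ->
  (0 < degH e V v)%N -> (5 * degH e V v <= 9 * nbrsIn e V (V :\: S) v)%N ->
  dominates e eps W (S :\ v).
Proof.
move=> sSV hS hdom vS dv hv.
case/boolP: (v \in W) => vW; last first.
  by rewrite /dominates setIDA (setDidPl _) // disjoint_sym disjoints1 inE (negbTE vW).
set D := W :\: (S :\ v).
have sDW : D \subset W by apply: subsetDl.
have WD : W :\: D = W :&: (S :\ v) by rewrite setDDr setDv set0U.
have volD : vol0 e D = (deg0 e v + vol0 e (W :\: S))%N.
  have -> : D = v |: (W :\: S) by rewrite /D setDDr setUC (setIidPr _) ?sub1set.
  by rewrite /vol0 big_setU1 //= inE vS.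
have degv := deg0_le_boundary e_sym e_irr S vW.
have nbv := nbrs_setD1_le sSV hv.
have cutD : (9 * nedges e D (W :\: D) <= 5 * vol0 e D)%N.
  apply: nedges_le_vol => x; rewrite inE => /andP[xS _].
  have hSv : closed_in e [set: T] (S :\ v).
    apply: closed_in_trans hV _ (closed_in_setD1 hS vS dv hv).
    exact: subset_trans (subD1set S v) sSV.
  have := closed_in_nbrsIn hSv (in_setT x) xS.
  rewrite degH_setT WD -!(nbrsIn_sub e x (subsetT _)).
  by have := nbrsIn_subset e [set: T] x (subsetIr W (S :\ v)); lia.
case: hW => _ hbd /(_ D sDW) /= hspD.
move/dominatesE: hdom => hdom; apply/dominatesE; rewrite -/D volD natrD in hspD *.
apply: (small_side_of_sparse_cut _ _ _ _ _ hbd _ hspD) => //.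
- by rewrite -natrD -!natrM ler_nat; lia.
- by rewrite -natrD -!natrM ler_nat -volD.
Qed.

Lemma moves_closed_dominates (S S' : {set T}) : moves e V S S' ->
  S \subset V -> closed_in e V S -> dominates e eps W S ->
  closed_in e V S' /\ dominates e eps W S'.
Proof.
elim=> [// | {}S S1 S2 [v vS [dv hv ->]] _ IH] sSV hS hdom.
apply: IH; first exact: subset_trans (subD1set S v) sSV.
  exact: closed_in_setD1 hS vS dv hv.
exact: dominates_setD1 sSV hS hdom vS dv hv.
Qed.

End LocalImprovement.

Unset Implicit Arguments.

Theorem mainTheorem11 (R : realFieldType) (T : finType) (e : rel T)
  (e_sym : symmetric e) (e_irr : irreflexive e)
  (eps : R) (eps_pos : (0 < eps)%R) (eps_small : (eps <= 1 / 2000000%:R)%R)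
  (W V S : {set T})
  (hW : spectral_cluster e eps W)
  (hV : closed_in e [set: T] V)
  (hSV : S \subset V)
  (hS : closed_in e V S)
  (hdom : dominates e eps W S) :
  (forall v, v \in S -> (0 < degH e V v)%N ->
     (5 * degH e V v <= 9 * nbrsIn e V (V :\: S) v)%N ->
     closed_in e V (S :\ v) /\ dominates e eps W (S :\ v))
  /\
  (forall S', moves e V S S' -> closed_in e V S' /\ dominates e eps W S').
Proof.
have eps_le : (eps <= 1 / 100)%R by lra.
split=> [v vS dv hv | S' hm].
  split; first exact: closed_in_setD1 hS vS dv hv.
  exact: (dominates_setD1 e_sym e_irr eps_pos eps_le hW hV hSV hS hdom vS dv hv).
exact: (moves_closed_dominates e_sym e_irr eps_pos eps_le hW hV hm hSV hS hdom).
Qed.
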